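(* Let $G$ be a finite group with identity $e$ and let $H$ be a normal subgroup of $G$. Then the subgroup sum graph $\Gamma_{G,H}$ admits a perfect code if and only if at least one of the following holds: (i) $H=\{e\}$; (ii) $|H|=2$; (iii) for every $x\in G\setminus H$ with $x^2\in H$, the coset $Hx$ contains an involution.
   Context: For a normal subgroup $H$ of a finite group $G$ with identity $e$, the subgroup sum graph $\Gamma_{G,H}$ is the simple undirected graph with vertex set $G$ in which distinct vertices $x,y$ are adjacent if and only if $xy\in H\setminus\{e\}$ (this is symmetric because $H$ is normal). A perfect code in a graph is a set $C$ of vertices that is independent and such that every vertex not in $C$ is adjacent to exactly one vertex of $C$. An involution is an element of order exactly $2$. *)

From mathcomp Require Import all_boot all_fingroup.
Set Implicit Arguments. Unset Strict Implicit. Unset Printing Implicit Defensive.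
Local Open Scope group_scope.

Definition ssg_adj (gT : finGroupType) (H : {set gT}) (x y : gT) : bool :=
  (x != y) && (x * y \in H :\ 1).

Definition is_perfect_code (gT : finGroupType) (G H C : {set gT}) : Prop :=
  [/\ C \subset G,
      {in C &, forall x y, ~~ ssg_adj H x y} &
      {in G :\: C, forall x, #|[set c in C | ssg_adj H x c]| = 1%N}].

Definition has_perfect_code (gT : finGroupType) (G H : {set gT}) : Prop :=
  exists C : {set gT}, is_perfect_code G H C.

Definition involution (gT : finGroupType) (y : gT) : bool := #[y] == 2%N.

From mathcomp Require Import all_boot all_fingroup all_solvable.
Set Implicit Arguments. Unset Strict Implicit. Unset Printing Implicit Defensive.
Local Open Scope group_scope.

(* For x in G, the neighbours of x in Gamma_{G,H} are the elements of the coset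
   H x^-1 other than x and x^-1.  Hence each pair of cosets {Hx, Hx^-1} is a union
   of components: for Hx <> Hx^-1 it is K_{n,n} minus a perfect matching, and
   {q, q^-1} is a perfect code of it for any q; for Hx = Hx^-1 it is K_n minus the
   matching c -- c^-1, which has a perfect code iff n <= 2 or some c in Hx has
   c^2 = 1.  Choosing q in every pair, preferring q^2 = 1, yields the code. *)

Section SquareRootOfOne.
Variable gT : finGroupType.

Definition sq1_repr (A : {set gT}) : gT :=
  odflt (repr A) [pick c in A | c ^+ 2 == 1].

Lemma sq1_repr_mem (A : {set gT}) x : x \in A -> sq1_repr A \in A.
Proof.
move=> xA; rewrite /sq1_repr; case: pickP => [c /andP[] | _] //=.
exact: mem_repr xA.
Qed.

Lemma sq1_repr_sq (A : {set gT}) :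
  (exists2 y, y \in A & y ^+ 2 = 1) -> sq1_repr A ^+ 2 = 1.
Proof.
case=> y yA y2; rewrite /sq1_repr; case: pickP => [c /andP[_ /eqP] | /(_ y)] //=.
by rewrite yA y2 eqxx.
Qed.

Lemma involution_sq1 (y : gT) : y != 1 -> y ^+ 2 = 1 -> involution y.
Proof.
move=> y1 /eqP; rewrite -order_dvdn /involution => dvd_y2.
rewrite -order_eq1 in y1; move: (dvdn_leq (isT : 0 < 2)%N dvd_y2) (order_gt0 y) y1.
by case: #[y] => [|[|[|]]].
Qed.

Lemma involution_sq (y : gT) : involution y -> y ^+ 2 = 1.
Proof. by move/eqP <-; rewrite expg_order. Qed.

End SquareRootOfOne.

Section SubgroupSumGraph.
Variables (gT : finGroupType) (G H : {group gT}).
Hypothesis nHG : H <| G.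

Lemma mulg_memE x y : x \in G -> (x * y \in H) = (y \in H :* x^-1).
Proof.
move=> xG; have xN := subsetP (normal_norm nHG) x xG.
by rewrite mem_rcoset invgK -(memJ_norm _ xN) conjgE !mulgA mulVg mul1g.
Qed.

Lemma ssg_adjE x y :
  x \in G -> ssg_adj H x y = [&& y \in H :* x^-1, y != x & y != x^-1].
Proof.
move=> xG; rewrite /ssg_adj in_setD1 -eq_invg_mul mulg_memE // eq_sym.
by rewrite [y == x^-1]eq_sym; case: (_ \in _); case: (_ == _); case: (_ == _).
Qed.

Lemma rcoset_subG x : x \in G -> H :* x \subset G.
Proof.
move=> xG; apply/subsetP=> y; rewrite mem_rcoset => /(subsetP (normal_sub nHG)).
by move=> yxG; rewrite -(mulgKV x y) groupM.
Qed.

Lemma mem_rcosetV x y : x \in G -> (y^-1 \in H :* x^-1) = (y \in H :* x).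
Proof.
move=> xG; have xN := subsetP (normal_norm nHG) _ (groupVr xG).
by rewrite norm_rlcoset // -invg_rcoset memV_invg.
Qed.

Lemma sq_rcosetE x : (x ^+ 2 \in H) = (H :* x == H :* x^-1).
Proof.
by rewrite expgS expg1 -{2}[x]invgK -mem_rcoset; apply: (sameP rcoset_eqP eqP).
Qed.

Definition coset_pair x := H :* x :|: H :* x^-1.

Lemma coset_pair_refl x : x \in coset_pair x.
Proof. by rewrite inE rcoset_refl. Qed.

Lemma coset_pairV x : coset_pair x^-1 = coset_pair x.
Proof. by rewrite /coset_pair invgK setUC. Qed.

Lemma coset_pair_subG x : x \in G -> coset_pair x \subset G.
Proof. by move=> xG; rewrite subUset !rcoset_subG ?groupV. Qed.

Lemma coset_pair_eq x y : x \in G -> y \in coset_pair x -> coset_pair y = coset_pair x.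
Proof.
have same x' y' : x' \in G -> y' \in H :* x' -> coset_pair y' = coset_pair x'.
  move=> x'G y'x'; have y'x'V : y'^-1 \in H :* x'^-1 by rewrite mem_rcosetV.
  by rewrite /coset_pair (rcoset_eqP y'x') (rcoset_eqP y'x'V).
move=> xG; case/setUP=> [/same -> // | /(same _ _ (groupVr xG))].
by rewrite coset_pairV.
Qed.

Definition pair_rep x := sq1_repr (coset_pair x).

Definition pair_code :=
  [set x in G | x \in [set pair_rep x; (pair_rep x)^-1]].

Lemma pair_rep_mem x : pair_rep x \in coset_pair x.
Proof. exact: sq1_repr_mem (coset_pair_refl x). Qed.

Lemma pair_rep_eq x y : x \in G -> y \in coset_pair x -> pair_rep y = pair_rep x.
Proof. by move=> xG yx; rewrite /pair_rep (coset_pair_eq xG yx). Qed.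

Lemma mem_pair_code x y :
  x \in G -> y \in coset_pair x ->
  (y \in pair_code) = (y \in [set pair_rep x; (pair_rep x)^-1]).
Proof.
move=> xG yx; rewrite inE (pair_rep_eq xG yx).
by rewrite (subsetP (coset_pair_subG xG)).
Qed.

(* Two code elements in one pair of cosets are q and q^-1, whose product is 1. *)
Lemma pair_code_indep : {in pair_code &, forall x y, ~~ ssg_adj H x y}.
Proof.
move=> x y xC yC; have xG : x \in G by case/setIdP: xC.
apply/negP; rewrite ssg_adjE // => /and3P[yx yNx yNxV].
have yP : y \in coset_pair x by rewrite inE yx orbT.
move: xC yC; rewrite (mem_pair_code xG (coset_pair_refl x)) (mem_pair_code xG yP).
set q := pair_rep x; rewrite !inE => /orP[]/eqP xq /orP[]/eqP yq.
all: by move: yNx yNxV; rewrite xq yq ?invgK eqxx.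
Qed.

Definition selfinv_cosets_sqrt1 :=
  forall x, x \in G -> x ^+ 2 \in H -> exists2 y, y \in H :* x & y ^+ 2 = 1.

Section SelfInverseCoset.
Variable x : gT.
Hypotheses (xG : x \in G) (x2H : x ^+ 2 \in H).

Lemma selfinv_rcosetV : H :* x^-1 = H :* x.
Proof. by apply/eqP; rewrite eq_sym -sq_rcosetE. Qed.

Lemma selfinv_coset_pair : coset_pair x = H :* x.
Proof. by rewrite /coset_pair selfinv_rcosetV setUid. Qed.

Lemma selfinv_memV c : c \in H :* x -> c^-1 \in H :* x.
Proof. by rewrite -{2}selfinv_rcosetV mem_rcosetV. Qed.

Lemma ssg_adj_selfinv c d :
  c \in H :* x -> d \in H :* x -> ssg_adj H c d = (d != c) && (d != c^-1).
Proof.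
move=> cx dx; have cG := subsetP (rcoset_subG xG) c cx.
have cVx : H :* c^-1 = H :* x.
  by rewrite -selfinv_rcosetV; apply/rcoset_eqP; rewrite mem_rcosetV.
by rewrite ssg_adjE // cVx dx.
Qed.

(* For small H: x, q and q^-1 all lie in H x, and x differs from q and q^-1. *)
Lemma pair_rep_selfinv :
  (#|H| <= 2)%N \/ selfinv_cosets_sqrt1 -> x \notin pair_code ->
  (pair_rep x)^-1 = pair_rep x.
Proof.
have qx : pair_rep x \in H :* x by rewrite -selfinv_coset_pair pair_rep_mem.
case=> [H_small xNC | sqrt1 _].
  have qVx := selfinv_memV qx; apply/eqP; rewrite eq_sym -[_ == _]negbK.
  have: (#|x |: [set pair_rep x; (pair_rep x)^-1]| <= 2)%N.
    rewrite (leq_trans _ H_small) // -(card_rcoset H x) subset_leq_card //.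
    by rewrite !subUset !sub1set rcoset_refl qx qVx.
  rewrite cardsU1 cards2 -(mem_pair_code xG (coset_pair_refl x)) xNC.
  by case: (_ != _).
apply/eqP; rewrite eq_invg_mul; apply/eqP/sq1_repr_sq.
by rewrite selfinv_coset_pair; apply: sqrt1.
Qed.

End SelfInverseCoset.

Lemma pair_code_nbrE x :
  x \in G :\: pair_code ->
  [set c in pair_code | ssg_adj H x c] =
  [set pair_rep x; (pair_rep x)^-1] :&: H :* x^-1.
Proof.
case/setDP=> xG; rewrite (mem_pair_code xG (coset_pair_refl x)) => xNq.
apply/setP=> c; rewrite inE in_setI ssg_adjE //.
have [cx|] := boolP (c \in H :* x^-1); last by rewrite !andbF.
have cP : c \in coset_pair x by rewrite inE cx orbT.
rewrite (mem_pair_code xG cP) andbT /=; case: (boolP (c \in _)) => //= cq.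
apply/andP; split; first by apply: contraNneq xNq => cx'; rewrite cx' in cq.
apply: contraNneq xNq => cxV; move: cq.
by rewrite cxV !inE !eq_invg_sym invgK orbC.
Qed.

Lemma cards2I_xor (T : finType) (a b : T) (A : {set T}) :
  (a \in A) = (b \notin A) -> #|[set a; b] :&: A| = 1%N.
Proof.
move=> ab; apply/eqP/cards1P; have [aA | aNA] := boolP (a \in A).
  have bNA : b \notin A by rewrite -ab.
  exists a; apply/setP=> z; rewrite !inE; case: (z =P a) => [-> // | _].
  by case: (z =P b) => [->|]; rewrite ?(negPf bNA).
have bA : b \in A by rewrite -[b \in A]negbK -ab (negPf aNA).
exists b; apply/setP=> z; rewrite !inE; case: (z =P b) => [->|_]; first by rewrite orbT.
by case: (z =P a) => [->|]; rewrite ?(negPf aNA).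
Qed.

Lemma pair_code_nbr_card1 x :
  (#|H| <= 2)%N \/ selfinv_cosets_sqrt1 -> x \in G :\: pair_code ->
  #|[set c in pair_code | ssg_adj H x c]| = 1%N.
Proof.
move=> hyp /[dup] xGC /setDP[xG xNC]; rewrite pair_code_nbrE //.
set q := pair_rep x; have qP : q \in coset_pair x := pair_rep_mem x.
have [x2H | x2NH] := boolP (x ^+ 2 \in H).
  rewrite (pair_rep_selfinv xG x2H hyp xNC) setUid (setIidPl _) ?cards1 //.
  by rewrite sub1set selfinv_rcosetV // -selfinv_coset_pair.
have qNboth : ~~ ((q \in H :* x) && (q \in H :* x^-1)).
  apply: contra x2NH => /andP[qx qxV].
  by rewrite sq_rcosetE -(rcoset_eqP qx) -(rcoset_eqP qxV).
apply: cards2I_xor; rewrite mem_rcosetV //.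
by move: qP qNboth; rewrite inE => /orP[]->; rewrite ?andbT /= => /negbTE->.
Qed.

Lemma pair_code_perfect :
  (#|H| <= 2)%N \/ selfinv_cosets_sqrt1 -> is_perfect_code G H pair_code.
Proof.
move=> hyp; split; first by apply/subsetP=> x /setIdP[].
  exact: pair_code_indep.
by move=> x; apply: pair_code_nbr_card1.
Qed.

Lemma perfect_code_nbr D x :
  is_perfect_code G H D -> x \in G :\: D ->
  exists c, forall d, (d \in D) && ssg_adj H x d = (d == c).
Proof.
case=> _ _ nbr /nbr /eqP/cards1P[c Dx]; exists c => d.
by rewrite -in_set1 -Dx inE.
Qed.

(* A code element c of a self-inverse coset with c != c^-1 forces, through a
   third element d of the coset, first c^-1 \notin D and then a code neighbour
   of c^-1 adjacent to c. *)
Lemma perfect_code_selfinv_sqrt1 D :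
  is_perfect_code G H D -> (2 < #|H|)%N -> selfinv_cosets_sqrt1.
Proof.
move=> /[dup] Dcode [_ Dindep _] H_big x xG x2H.
have adj := ssg_adj_selfinv xG x2H; have xV := selfinv_memV xG x2H.
have AG := subsetP (rcoset_subG xG).
have [c cD cx] : exists2 c, c \in D & c \in H :* x.
  have [xD | xND] := boolP (x \in D); first by exists x; rewrite ?rcoset_refl.
  have xGD : x \in G :\: D by rewrite inE xND.
  have [c /(_ c)] := perfect_code_nbr Dcode xGD.
  rewrite eqxx ssg_adjE // => /and4P[cD cx _ _].
  by exists c => //; rewrite -(selfinv_rcosetV x2H).
exists c => //; apply/eqP; apply: contraT => c2; move: c2.
rewrite -[c ^+ 2]/(c * c) -eq_invg_mul => cNcV.
have [d [dA dNc dNcV]] : exists d, [/\ d \in H :* x, d != c & d != c^-1].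
  have : (0 < #|H :* x :\: [set c; c^-1]|)%N.
    rewrite cardsD card_rcoset subn_gt0 (leq_ltn_trans _ H_big) //.
    by rewrite (leq_trans (subset_leq_card (subsetIr _ _))) // cards2; case: (_ != _).
  by case/card_gt0P=> d; rewrite !inE negb_or => /andP[/andP[? ?] ?]; exists d.
have dc : ssg_adj H d c by rewrite adj // eq_sym dNc eq_sym eq_invg_sym dNcV.
have dND : d \notin D by apply: contraL dc => dD; apply: Dindep.
have dGD : d \in G :\: D by rewrite inE dND AG.
have [e De] := perfect_code_nbr Dcode dGD.
have ce : c = e by apply/eqP; rewrite -De cD dc.
have cVND : c^-1 \notin D.
  apply: contra cNcV => cVD; have := De c^-1; rewrite cVD adj ?xV // -ce => <-.
  by rewrite eq_sym dNcV (inj_eq invg_inj) eq_sym dNc.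
have cVGD : c^-1 \in G :\: D by rewrite inE cVND AG ?xV.
have [f /(_ f)] := perfect_code_nbr Dcode cVGD.
rewrite eqxx ssg_adjE ?groupV ?AG // invgK => /and4P[fD fc fNcV fNc].
by move: (Dindep c f cD fD); rewrite adj // ?fNc ?fNcV // -(rcoset_eqP cx).
Qed.

End SubgroupSumGraph.

Theorem theorem3p1 (gT : finGroupType) (G H : {group gT}) :
  H <| G ->
  has_perfect_code G H <->
  [\/ H :=: 1,
      #|H| = 2%N
    | forall x, x \in G :\: H -> x ^+ 2 \in H ->
        exists2 y, y \in H :* x & involution y].
Proof.
move=> nHG; split=> [[D Dcode] | conds].
  have [H_small | H_big] := leqP #|H| 2.
    move: (cardG_gt0 H) H_small (trivg_card1 H).
    by case: #|H| => [|[|[|]]] //= _ _ => [/eqP H1 | _]; [exact: Or31 | exact: Or32].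
  apply: Or33 => x /setDP[xG xNH] x2H.
  have [y yx y2] := perfect_code_selfinv_sqrt1 nHG Dcode H_big xG x2H.
  exists y => //; apply: involution_sq1 y2.
  by apply: contraNneq xNH => y1; move: yx; rewrite y1 mem_rcoset mul1g groupV.
exists (pair_code G H); apply: pair_code_perfect => //.
case: conds => [H1 | H2 | invs]; [by left; rewrite H1 cards1 | by left; rewrite H2 |].
right=> x xG x2H; have [xH | xNH] := boolP (x \in H).
  by exists 1; rewrite ?expg1n // mem_rcoset mul1g groupV.
have xGH : x \in G :\: H by rewrite inE xNH.
by have [y yx /involution_sq] := invs x xGH x2H; exists y.
Qed.
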